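(* Let $\mathscr{a}\in\mathbb{R}$, $\mathscr{b}\in(\mathscr{a},\infty)$, $\rho\in(0,\infty)$, $f\in C([\mathscr{a},\mathscr{b}],\mathbb{R})$, for $\theta=(\theta_1,\theta_2,\theta_3,\theta_4)\in\mathbb{R}^4$ and $x\in\mathbb{R}$ let $\mathscr{N}^\theta(x)=\theta_3\max\{\theta_1x+\theta_2,0\}+\theta_4$ and $\mathcal{L}(\theta)=\rho\int_{\mathscr{a}}^{\mathscr{b}}(\mathscr{N}^\theta(y)-f(y))^2\,\mathrm{d}y$, let $m=\rho\int_{\mathscr{a}}^{\mathscr{b}}\big(f(x)-(\mathscr{b}-\mathscr{a})^{-1}\int_{\mathscr{a}}^{\mathscr{b}}f(y)\,\mathrm{d}y\big)^2\,\mathrm{d}x$, and let $\theta\in\mathbb{R}^4$ satisfy $\mathcal{L}(\theta)<m$. Then $\max\{\theta_1\mathscr{a}+\theta_2,\ \theta_1\mathscr{b}+\theta_2\}>0$. *)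

From Stdlib Require Import Reals Lra.
From Coquelicot Require Import Coquelicot.
Open Scope R_scope.

Definition realization (th1 th2 th3 th4 x : R) : R :=
  th3 * Rmax (th1 * x + th2) 0 + th4.

Definition loss (a b rho : R) (f : R -> R) (th1 th2 th3 th4 : R) : R :=
  rho * RInt (fun y => (realization th1 th2 th3 th4 y - f y) ^ 2) a b.

Definition mval (a b rho : R) (f : R -> R) : R :=
  rho * RInt (fun x => (f x - / (b - a) * RInt f a b) ^ 2) a b.

Definition continuous_on_interval (a b : R) (f : R -> R) : Prop :=
  forall x, a <= x <= b ->
    filterlim f (within (fun y => a <= y <= b) (locally x)) (locally (f x)).

From Stdlib Require Import Reals Lra.
From Coquelicot Require Import Coquelicot.
Open Scope R_scope.

(* If both [th1 a + th2] and [th1 b + th2] are nonpositive, then so is the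
   affine function [th1 x + th2] on all of [a, b]: the neuron is inactive and
   the network is the constant [th4] there.  Among constants, the mean of [f]
   minimises the squared L2 distance to [f], because
   [int (c - f)^2 = int (f - mean f)^2 + (b - a) (mean f - c)^2];
   hence the loss is at least [m]. *)

Definition clamp (a b x : R) : R := Rmax a (Rmin b x).

Lemma clamp_bounds a b x : a <= b -> a <= clamp a b x <= b.
Proof. intros; unfold clamp, Rmax, Rmin; repeat destruct Rle_dec; lra. Qed.

Lemma clamp_id a b x : a <= x <= b -> clamp a b x = x.
Proof. intros; unfold clamp, Rmax, Rmin; repeat destruct Rle_dec; lra. Qed.

Lemma filterlim_clamp a b x : a <= b ->
  filterlim (clamp a b) (locally x)
    (within (fun y => a <= y <= b) (locally (clamp a b x))).
Proof.
  intros hab P [eps HP]; exists eps; intros y Hy.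
  apply HP; [|now apply clamp_bounds].
  change (Rabs (y - x) < eps) in Hy.
  change (Rabs (clamp a b y - clamp a b x) < eps).
  apply Rabs_def2 in Hy; apply Rabs_def1;
    unfold clamp, Rmax, Rmin; repeat destruct Rle_dec; lra.
Qed.

(* Composing with [clamp] extends [f] from [a, b] to a function continuous on
   all of [R], to which Coquelicot's integrability criterion applies. *)
Lemma continuous_comp_clamp a b (f : R -> R) x :
  a <= b -> continuous_on_interval a b f ->
  continuous (fun y => f (clamp a b y)) x.
Proof.
  intros hab hf.
  eapply filterlim_comp; [now apply filterlim_clamp|].
  apply hf; now apply clamp_bounds.
Qed.

Lemma continuous_on_interval_comp a b (f phi : R -> R) :
  continuous_on_interval a b f -> (forall y, continuous phi y) ->
  continuous_on_interval a b (fun x => phi (f x)).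
Proof.
  intros hf hphi x Hx.
  eapply filterlim_comp; [now apply hf|apply hphi].
Qed.

Lemma ex_RInt_continuous_on_interval a b (f : R -> R) : a <= b ->
  continuous_on_interval a b f -> ex_RInt f a b.
Proof.
  intros hab hf.
  apply (ex_RInt_ext (fun y => f (clamp a b y))).
  - rewrite Rmin_left, Rmax_right by exact hab.
    intros x Hx; rewrite clamp_id by lra; reflexivity.
  - apply (ex_RInt_continuous (V:=R_CompleteNormedModule)); intros z _.
    now apply continuous_comp_clamp.
Qed.

Definition mean (a b : R) (g : R -> R) : R := / (b - a) * RInt g a b.

Lemma is_RInt_sub_mean a b (g : R -> R) : a <> b -> ex_RInt g a b ->
  is_RInt (fun x => g x - mean a b g) a b 0.
Proof.
  intros hab hg.
  replace 0 with (RInt g a b - (b - a) * mean a b g)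
    by (unfold mean; field; lra).
  apply (is_RInt_minus (V:=R_NormedModule)).
  - now apply (RInt_correct (V:=R_CompleteNormedModule)).
  - apply (is_RInt_const (V:=R_NormedModule)).
Qed.

Lemma RInt_sq_sub_const a b (g : R -> R) c : a <> b -> ex_RInt g a b ->
  ex_RInt (fun x => (g x - mean a b g) ^ 2) a b ->
  RInt (fun x => (c - g x) ^ 2) a b
  = RInt (fun x => (g x - mean a b g) ^ 2) a b + (b - a) * (mean a b g - c) ^ 2.
Proof.
  intros hab hg hsq; set (mu := mean a b g).
  apply is_RInt_unique.
  apply (is_RInt_ext (V:=R_NormedModule)
    (fun x => (g x - mu) ^ 2 + (2 * (mu - c) * (g x - mu) + (mu - c) ^ 2))).
  (* [simpl] exposes the carrier [R] of [R_NormedModule] to [ring]. *)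
  { intros x _; simpl; ring. }
  apply (is_RInt_plus (V:=R_NormedModule));
    [now apply (RInt_correct (V:=R_CompleteNormedModule))|].
  replace ((b - a) * (mu - c) ^ 2)
    with (2 * (mu - c) * 0 + (b - a) * (mu - c) ^ 2) by ring.
  apply (is_RInt_plus (V:=R_NormedModule)).
  - apply (is_RInt_scal (V:=R_NormedModule)); now apply is_RInt_sub_mean.
  - apply (is_RInt_const (V:=R_NormedModule)).
Qed.

Lemma RInt_sq_sub_mean_le a b (g : R -> R) c : a < b -> ex_RInt g a b ->
  ex_RInt (fun x => (g x - mean a b g) ^ 2) a b ->
  RInt (fun x => (g x - mean a b g) ^ 2) a b <= RInt (fun x => (c - g x) ^ 2) a b.
Proof.
  intros hab hg hsq.
  rewrite (RInt_sq_sub_const a b g c) by (lra || assumption).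
  assert (0 <= (b - a) * (mean a b g - c) ^ 2)
    by (apply Rmult_le_pos; [lra|apply pow2_ge_0]).
  lra.
Qed.

Lemma affine_nonpos_between th1 th2 a b x :
  th1 * a + th2 <= 0 -> th1 * b + th2 <= 0 -> a <= x <= b ->
  th1 * x + th2 <= 0.
Proof. intros; destruct (Rle_lt_dec 0 th1); nra. Qed.

Lemma realization_inactive th1 th2 th3 th4 x : th1 * x + th2 <= 0 ->
  realization th1 th2 th3 th4 x = th4.
Proof. intros H; unfold realization; rewrite Rmax_right by exact H; ring. Qed.

Lemma mval_le_loss_inactive a b rho (f : R -> R) th1 th2 th3 th4 :
  a < b -> 0 < rho -> continuous_on_interval a b f ->
  th1 * a + th2 <= 0 -> th1 * b + th2 <= 0 ->
  mval a b rho f <= loss a b rho f th1 th2 th3 th4.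
Proof.
  intros hab hrho hf ha hb; unfold mval, loss.
  apply Rmult_le_compat_l; [lra|].
  rewrite (RInt_ext (fun y => (realization th1 th2 th3 th4 y - f y) ^ 2)
                    (fun y => (th4 - f y) ^ 2)).
  2:{ rewrite Rmin_left, Rmax_right by lra; intros x Hx.
      rewrite (realization_inactive th1 th2 th3 th4 x); [reflexivity|].
      apply (affine_nonpos_between th1 th2 a b); lra. }
  apply (RInt_sq_sub_mean_le a b f th4 hab).
  - apply ex_RInt_continuous_on_interval; [lra|exact hf].
  - apply ex_RInt_continuous_on_interval; [lra|].
    apply (continuous_on_interval_comp a b f (fun y => (y - mean a b f) ^ 2) hf).
    intros y; apply (ex_derive_continuous (V:=R_NormedModule)); auto_derive; trivial.
Qed.

Theorem lemma5p7 (a b rho : R) (f : R -> R) (th1 th2 th3 th4 : R)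
  (hab : a < b) (hrho : 0 < rho) (hf : continuous_on_interval a b f)
  (hL : loss a b rho f th1 th2 th3 th4 < mval a b rho f) :
  Rmax (th1 * a + th2) (th1 * b + th2) > 0.
Proof.
  apply Rnot_le_gt; intros Hle.
  apply (Rlt_not_le _ _ hL).
  apply mval_le_loss_inactive; try assumption.
  - exact (Rle_trans _ _ _ (Rmax_l _ _) Hle).
  - exact (Rle_trans _ _ _ (Rmax_r _ _) Hle).
Qed.
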